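(* If $(S,K,I)$ is a split graph and $C$ is an induced cycle in the factor graph $\Phi(S)$, then $|C|\leq 4$.
   Context: A split graph $(S,K,I)$ is a graph $S$ together with a fixed partition $V(S)=K\dot\cup I$, where $K$ is a clique and $I$ is an independent set. For a vertex $v$ of $S$, $N_v$ denotes its open neighborhood in $S$ and $d_v=|N_v|$; $\eta_{uv}=|N_u\cap N_v|$. The factor graph $\Phi(S)$ is the loopless multigraph with vertex set $I$ in which, for distinct $u,v\in I$, there is one edge joining $u$ and $v$ for each 2-switch of $S$ acting on $u$ and $v$ (a 2-switch replaces edges $ab,cd$ with $ac,bd$ when $ab,cd\in E(S)$ and $ac,bd\notin E(S)$); equivalently, the multiplicity of $uv$ is $\sigma_{uv}=(d_u-\eta_{uv})(d_v-\eta_{uv})$, and $u,v$ are adjacent iff $\sigma_{uv}>0$. An induced cycle $C=v_1\ldots v_nv_1$ ($n\geq 3$) in $\Phi(S)$ consists of distinct vertices with $v_iv_{i+1}$ and $v_nv_1$ adjacent and no other pair adjacent (multiplicities ignored); $|C|=n$. *)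

From mathcomp Require Import all_boot.
Set Implicit Arguments. Unset Strict Implicit. Unset Printing Implicit Defensive.

Definition simple_graph (T : finType) (e : rel T) : Prop :=
  symmetric e /\ irreflexive e.

Definition split_graph (T : finType) (e : rel T) (K I : {set T}) : Prop :=
  [/\ simple_graph e,
      K :&: I = set0,
      K :|: I = setT,
      (forall x y, x \in K -> y \in K -> x != y -> e x y)
    & (forall x y, x \in I -> y \in I -> ~~ e x y)].

Section Factor.
Variables (T : finType) (e : rel T).

Definition nbhd (v : T) : {set T} := [set w | e v w].
Definition deg (v : T) : nat := #|nbhd v|.
Definition eta (u v : T) : nat := #|nbhd u :&: nbhd v|.

(* multiplicity of uv in the factor graph *)
Definition sigma (u v : T) : nat := (deg u - eta u v) * (deg v - eta u v).

Definition factor_adj (I : {set T}) (u v : T) : bool :=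
  [&& u \in I, v \in I, u != v & 0 < sigma u v].

Definition induced_cycle (I : {set T}) (c : seq T) : Prop :=
  [/\ 3 <= size c, uniq c, all (fun x => x \in I) c &
      forall (x0 : T) i j, i < size c -> j < size c ->
        (factor_adj I (nth (x0) c i) (nth (x0) c j)
         <-> (j = (i.+1) %% size c \/ i = (j.+1) %% size c))].
End Factor.

(** Adjacency in the factor graph only depends on the neighbourhoods: [sigma u v]
    is positive exactly when [N_u] and [N_v] are incomparable under inclusion.
    Hence [Phi(S)] is an induced subgraph of the incomparability graph of the
    preorder of neighbourhoods, and such graphs have no induced cycle
    [v_0 ... v_(n-1)] with [n >= 5]: transitivity forces the comparabilities
    [N_(v_i) ⊆ N_(v_(i+2))] to propagate all around the cycle in one direction,
    and combining steps of length 2 and 3 then yields [N_(v_0) ⊆ N_(v_(n+1))],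
    i.e. a comparability between the adjacent [v_0] and [v_1]. *)

From mathcomp Require Import all_boot.

Set Implicit Arguments.
Unset Strict Implicit.
Unset Printing Implicit Defensive.

Lemma subn_cardI_gt0 (T : finType) (A B : {set T}) :
  (0 < #|A| - #|A :&: B|) = ~~ (A \subset B).
Proof.
rewrite subn_gt0 -subsetIidl.
by have := properEcard (A :&: B) A; rewrite properE subsetIl /= => ->.
Qed.

Lemma sigma_gt0 (T : finType) (e : rel T) (u v : T) :
  (0 < sigma e u v) =
  ~~ (nbhd e u \subset nbhd e v) && ~~ (nbhd e v \subset nbhd e u).
Proof. by rewrite /sigma /eta muln_gt0 !subn_cardI_gt0 setIC subn_cardI_gt0. Qed.

Lemma factor_adjE (T : finType) (e : rel T) (I : {set T}) (u v : T) :
  u \in I -> v \in I -> u != v ->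
  factor_adj e I u v =
  ~~ (nbhd e u \subset nbhd e v) && ~~ (nbhd e v \subset nbhd e u).
Proof. by move=> uI vI neq_uv; rewrite /factor_adj uI vI neq_uv sigma_gt0. Qed.

Lemma eqn_modDl_small (a d d' n : nat) :
  d < n -> d' < n -> ((a + d) %% n == (a + d') %% n) = (d == d').
Proof. by move=> lt_dn lt_d'n; rewrite eqn_modDl !modn_small. Qed.

Section PeriodicIncomparabilityCycle.

Variables (X : Type) (R : rel X) (f : nat -> X).
Hypothesis R_trans : transitive R.
Hypothesis incomparable_succ :
  forall i, ~~ R (f i) (f i.+1) && ~~ R (f i.+1) (f i).
Hypothesis comparable_add2 :
  forall i, R (f i) (f (i + 2)) || R (f (i + 2)) (f i).
Hypothesis comparable_add3 :
  forall i, R (f i) (f (i + 3)) || R (f (i + 3)) (f i).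

Lemma rel_add2_step i :
  R (f i) (f (i + 2)) -> R (f i) (f (i + 3)) /\ R (f i.+1) (f (i.+1 + 2)).
Proof.
move=> Ri2.
have Ri3 : R (f i) (f (i + 3)).
  case/orP: (comparable_add3 i) => // R3i.
  have /andP[_ /negP[]] := incomparable_succ (i + 2).
  by rewrite -addnS; apply: R_trans R3i Ri2.
split=> //; case/orP: (comparable_add2 i.+1) => //; rewrite addSn -addnS => R3i1.
by have /andP[/negP[]] := incomparable_succ i; apply: R_trans R3i1.
Qed.

Lemma rel_add2_all : R (f 0) (f 2) -> forall i, R (f i) (f (i + 2)).
Proof. by move=> R02; elim=> // i /rel_add2_step[]. Qed.

Lemma rel_add_ge2 : R (f 0) (f 2) -> forall j i, 1 < j -> R (f i) (f (i + j)).
Proof.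
move=> /rel_add2_all R2 j; elim/ltn_ind: j => -[|[|[|[|j]]]] IH i // _.
  exact: (rel_add2_step (R2 i)).1.
have -> : i + j.+4 = i + 2 + j.+2 by rewrite -addnA.
exact: R_trans (R2 i) (IH _ _ _ _).
Qed.

Lemma not_rel_add2 (n : nat) :
  0 < n -> (forall i, f (i + n) = f i) -> ~~ R (f 0) (f 2).
Proof.
move=> n_gt0 f_periodic; apply/negP => /rel_add_ge2 /(_ (1 + n) 0).
rewrite add0n f_periodic add1n ltnS => /(_ n_gt0) R01.
by have /andP[/negP] := incomparable_succ 0.
Qed.

End PeriodicIncomparabilityCycle.

Lemma no_periodic_incomparability_cycle
    (X : Type) (R : rel X) (f : nat -> X) (n : nat) :
  transitive R -> 0 < n -> (forall i, f (i + n) = f i) ->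
  (forall i, ~~ R (f i) (f i.+1) && ~~ R (f i.+1) (f i)) ->
  (forall i, R (f i) (f (i + 2)) || R (f (i + 2)) (f i)) ->
  (forall i, R (f i) (f (i + 3)) || R (f (i + 3)) (f i)) ->
  False.
Proof.
move=> R_trans n_gt0 f_periodic incomp comp2 comp3.
have /negPf not_R02 := not_rel_add2 R_trans incomp comp2 comp3 n_gt0 f_periodic.
have /negPf not_R20 : ~~ (fun x y => R y x) (f 0) (f 2).
  apply: (@not_rel_add2 _ (fun x y => R y x) f _ _ _ _ n n_gt0 f_periodic)
    => [y x z Ryx Rzy|i|i|i] /=.
  - exact: R_trans Rzy Ryx.
  - by rewrite andbC.
  - by rewrite orbC.
  - by rewrite orbC.
by have := comp2 0; rewrite not_R02 not_R20.
Qed.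

Section InducedCycle.

Variables (T : finType) (e : rel T) (I : {set T}) (c : seq T).
Hypothesis c_induced : induced_cycle e I c.
Variable x0 : T.

Local Notation n := (size c).
Local Notation N i := (nbhd e (nth x0 c (i %% n))).

Lemma induced_cycle_size_gt0 : 0 < n.
Proof. by case: c_induced => /ltnW /ltnW. Qed.

Lemma induced_cycle_adjE i j : i != j %[mod n] ->
  factor_adj e I (nth x0 c (i %% n)) (nth x0 c (j %% n)) =
  ~~ (N i \subset N j) && ~~ (N j \subset N i).
Proof.
have n_gt0 := induced_cycle_size_gt0.
case: c_induced => _ c_uniq /allP c_in_I _ neq_ij.
by apply: factor_adjE; rewrite ?c_in_I ?mem_nth ?nth_uniq ?ltn_pmod.
Qed.

Lemma induced_cycle_succ_incomparable i :
  ~~ (N i \subset N i.+1) && ~~ (N i.+1 \subset N i).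
Proof.
have n_gt0 := induced_cycle_size_gt0.
have n_gt2 : 2 < n by case: c_induced.
rewrite -induced_cycle_adjE; last first.
  by rewrite -[i in i %% _]addn0 -addn1 eqn_modDl_small // ltnW.
case: c_induced => _ _ _ /(_ x0 (i %% n) (i.+1 %% n)).
move=> /(_ (ltn_pmod _ n_gt0) (ltn_pmod _ n_gt0)) adj.
by apply/adj; left; rewrite -[(i %% n).+1]addn1 modnDml addn1.
Qed.

Lemma induced_cycle_far_comparable i d : 1 < d -> d.+1 < n ->
  (N i \subset N (i + d)) || (N (i + d) \subset N i).
Proof.
move=> d_gt1 lt_d1n; have lt_dn := ltnW lt_d1n.
have lt_1n := ltn_trans d_gt1 lt_dn.
have n_gt0 := induced_cycle_size_gt0.
apply/negPn; rewrite negb_or -induced_cycle_adjE; last first.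
  by rewrite -[i in i %% _]addn0 eqn_modDl_small // eq_sym -lt0n ltnW.
case: c_induced => _ _ _ /(_ x0 (i %% n) ((i + d) %% n)).
move=> /(_ (ltn_pmod _ n_gt0) (ltn_pmod _ n_gt0)) adj.
apply/negP => /adj[] /eqP; apply/negP.
- by rewrite -[(i %% n).+1]addn1 modnDml eqn_modDl_small // gtn_eqF.
- rewrite -[((i + d) %% n).+1]addn1 modnDml -addnA addn1.
  by rewrite -[i in i %% n]addn0 eqn_modDl_small.
Qed.

End InducedCycle.

Theorem theorem3p3 (T : finType) (e : rel T) (K I : {set T}) (c : seq T) :
  split_graph e K I -> induced_cycle e I c -> size c <= 4.
Proof.
move=> _ c_induced; rewrite leqNgt; apply/negP => c_gt4.
have x0 : T by case: c c_gt4 {c_induced} => // x.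
pose N i := nbhd e (nth x0 c (i %% size c)).
have sub_trans : transitive (fun A B : {set T} => A \subset B).
  by move=> B A C; apply: subset_trans.
apply: (@no_periodic_incomparability_cycle _ _ N (size c) sub_trans).
- exact: induced_cycle_size_gt0 c_induced.
- by move=> i; rewrite /N modnDr.
- exact: induced_cycle_succ_incomparable c_induced x0.
- by move=> i; apply: (induced_cycle_far_comparable c_induced) => //; apply: ltnW.
- by move=> i; apply: (induced_cycle_far_comparable c_induced).
Qed.
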